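(* Let $k\ge1$, let $U\subseteq\mathbb{R}^n$ be a domain, and let $f:U\times\mathbb{R}^n\to Cl_n$ be such that for each $x\in U$ the function $u\mapsto f(x,u)$ is a $Cl_n$-valued harmonic polynomial homogeneous of degree $k$. For $y\in\mathbb{R}^n\setminus\{0\}$ with $y^{-1}\in U$ and $w\in\mathbb{R}^n$, put $x=y^{-1}$ and $u=\frac{ywy}{\|y\|^2}$. Then $$P_{k,w}\Big[\frac{y}{\|y\|^n}f\Big(y^{-1},\frac{ywy}{\|y\|^2}\Big)\Big]=\frac{y}{\|y\|^n}\big(P_{k,u}f\big)(x,u)\Big|_{x=y^{-1},\ u=ywy/\|y\|^2}.$$
   Context: $Cl_n$ is the real Clifford algebra generated by an orthonormal basis $e_1,\dots,e_n$ of $\mathbb{R}^n\subseteq Cl_n$ with $e_ie_j+e_je_i=-2\delta_{ij}$; for a nonzero vector $y$, $y^{-1}=-y/\|y\|^2$. The Dirac operator in the variable $u$ is $D_u=\sum_{j=1}^n e_j\partial_{u_j}$. $\mathcal M_k$ denotes the space of $Cl_n$-valued polynomials $p(u)$ on $\mathbb{R}^n$, homogeneous of degree $k$, with $D_up=0$ (left monogenic). Every $Cl_n$-valued harmonic polynomial $h$ homogeneous of degree $k$ in $u$ decomposes uniquely as $h(u)=p_k(u)+u\,p_{k-1}(u)$ with $p_k\in\mathcal M_k$, $p_{k-1}\in\mathcal M_{k-1}$ (Almansi–Fischer decomposition); the projection $P_k$ is defined by $P_kh=p_k$, and explicitly $P_k=1+\frac{uD_u}{n+2k-2}$. A subscript,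 as in $P_{k,u}$, indicates the variable in which the projection acts. *)

From Stdlib Require Import Reals ClassicalEpsilon.
From mathcomp Require Import all_boot.
Set Implicit Arguments. Unset Strict Implicit. Unset Printing Implicit Defensive.

Local Open Scope R_scope.

Definition vec (n : nat) := 'I_n -> R.

Definition rsum (T : finType) (F : T -> R) : R := \big[Rplus/0]_(i : T) F i.

Definition dot n (x y : vec n) : R := rsum (fun i => x i * y i).
Definition norm n (x : vec n) : R := sqrt (dot x x).
Definition vzero n : vec n := fun _ => 0.
Definition vscale n (c : R) (x : vec n) : vec n := fun i => c * x i.
Definition vadd n (x y : vec n) : vec n := fun i => x i + y i.
Definition unitv n (j : 'I_n) : vec n := fun i => if i == j then 1 else 0.

(* The real Clifford algebra Cl_n: elements are families of real coefficients
   indexed by subsets A of {1..n}, the coefficient of e_A = e_{a1}...e_{ap}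
   (a1 < ... < ap). *)
Definition Cl (n : nat) := {set 'I_n} -> R.

Definition cl0 n : Cl n := fun _ => 0.
Definition cladd n (a b : Cl n) : Cl n := fun A => a A + b A.
Definition clscale n (c : R) (a : Cl n) : Cl n := fun A => c * a A.

(* sign of e_A e_B = sign * e_{A Δ B}, using e_i e_j = - e_j e_i (i<>j)
   and e_i^2 = -1 *)
Definition clsign n (A B : {set 'I_n}) : R :=
  (-1) ^ (#|[set p : 'I_n * 'I_n | (p.1 \in A) && (p.2 \in B) && (p.2 < p.1)%N]|
          + #|A :&: B|).

Definition clmul n (a b : Cl n) : Cl n := fun C =>
  rsum (fun A : {set 'I_n} =>
          let B := (A :\: C) :|: (C :\: A) in clsign A B * a A * b B).

Definition tocl n (x : vec n) : Cl n := fun A => rsum (fun i => if A == [set i] then x i else 0).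
Definition grade1 n (a : Cl n) : vec n := fun i => a [set i].

Definition vinv n (y : vec n) : vec n := vscale (- / (norm y ^ 2)) y.

(* Partial derivative d/du_j of a real function on R^n at u (the derivative,
   when it exists; chosen by classical description). *)
Definition rpartial n (h : vec n -> R) (j : 'I_n) (u : vec n) : R :=
  epsilon (inhabits 0)
    (fun l => derivable_pt_lim (fun t => h (vadd u (vscale t (unitv j)))) 0 l).

Definition rdifferentiable_partial n (h : vec n -> R) (j : 'I_n) (u : vec n) : Prop :=
  exists l, derivable_pt_lim (fun t => h (vadd u (vscale t (unitv j)))) 0 l.

Definition clpartial n (g : vec n -> Cl n) (j : 'I_n) : vec n -> Cl n :=
  fun u A => rpartial (fun v => g v A) j u.

Definition dirac n (g : vec n -> Cl n) : vec n -> Cl n := fun u A =>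
  rsum (fun j : 'I_n => clmul (tocl (unitv j)) (clpartial g j u) A).

Definition laplacian n (g : vec n -> Cl n) : vec n -> Cl n := fun u A =>
  rsum (fun j : 'I_n => clpartial (clpartial g j) j u A).

Definition monomial n (alpha : 'I_n -> nat) (u : vec n) : R :=
  \big[Rmult/1]_(i : 'I_n) (u i ^ alpha i).

Definition homogeneous_poly n (k : nat) (g : vec n -> Cl n) : Prop :=
  exists s : seq (('I_n -> nat) * Cl n),
    (forall m, List.In m s -> (\sum_(i : 'I_n) m.1 i)%N = k) /\
    forall u A, g u A = \big[Rplus/0]_(m <- s) (m.2 A * monomial m.1 u).

Definition harmonic_hom_poly n (k : nat) (g : vec n -> Cl n) : Prop :=
  homogeneous_poly k g /\ forall u, laplacian g u = @cl0 n.

Definition Pk n (k : nat) (g : vec n -> Cl n) : vec n -> Cl n := fun u =>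
  cladd (g u) (clscale (/ INR (n + 2 * k - 2)) (clmul (tocl u) (dirac g u))).

Definition open_set n (U : vec n -> Prop) : Prop :=
  forall x, U x -> exists eps, 0 < eps /\
    forall z, norm (vadd z (vscale (-1) x)) < eps -> U z.

Definition connected_set n (U : vec n -> Prop) : Prop :=
  forall V W : vec n -> Prop, open_set V -> open_set W ->
    (forall x, U x -> V x \/ W x) ->
    (forall x, U x -> V x -> W x -> False) ->
    (forall x, U x -> ~ V x) \/ (forall x, U x -> ~ W x).

Definition domain n (U : vec n -> Prop) : Prop :=
  (exists x, U x) /\ open_set U /\ connected_set U.

(* Put psi(w) = y w y / |y|^2.  In R^n this is w - 2 <y,w> y / |y|^2, the reflection in
   the hyperplane orthogonal to y: a linear map with a symmetric matrix.  For
   G(w) = y F(psi w) the chain rule and this symmetry give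
   D_w G = sum_k psi(e_k) y (d_k F)(psi w), and the Clifford identity psi(v) y = - y v
   turns this into - y (D_u F)(psi w).  Since moreover w y = - y psi(w), we get
   w D_w G = y psi(w) (D_u F)(psi w), so both sides of the identity agree term by term.
   All that is needed of F is that its directional derivatives exist and are linear in
   the direction, which holds for polynomials. *)

From Stdlib Require Import Reals Lra FunctionalExtensionality ClassicalEpsilon.
From HB Require Import structures.
From mathcomp Require Import all_boot.
Set Implicit Arguments. Unset Strict Implicit. Unset Printing Implicit Defensive.
Local Open Scope R_scope.

HB.instance Definition _ := Monoid.isComLaw.Build R 0 Rplus
  (fun x y z => esym (Rplus_assoc x y z)) Rplus_comm Rplus_0_l.
HB.instance Definition _ := Monoid.isComLaw.Build R 1 Rmult
  (fun x y z => esym (Rmult_assoc x y z)) Rmult_comm Rmult_1_l.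
HB.instance Definition _ := Monoid.isMulLaw.Build R 0 Rmult Rmult_0_l Rmult_0_r.
HB.instance Definition _ := Monoid.isAddLaw.Build R Rmult Rplus
  Rmult_plus_distr_r Rmult_plus_distr_l.

Section Vectors.
Variable n : nat.
Implicit Types (a b c y : vec n) (i j : 'I_n).

Lemma rsum_delta (F : 'I_n -> R) i : rsum (fun j => if j == i then F j else 0) = F i.
Proof. by rewrite /rsum -big_mkcond big_pred1_eq. Qed.

Lemma dotC a b : dot a b = dot b a.
Proof. by rewrite /dot /rsum; apply: eq_bigr => i _; ring. Qed.

Lemma dot_unitv a j : dot a (unitv j) = a j.
Proof.
rewrite /dot -(rsum_delta a j) /rsum; apply: eq_bigr => i _.
by rewrite /unitv; case: eqP => _; ring.
Qed.

Lemma dotDr a b c : dot a (vadd b c) = dot a b + dot a c.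
Proof. by rewrite /dot /rsum -big_split; apply: eq_bigr => i _ /=; rewrite /vadd; ring. Qed.

Lemma dotZr a b t : dot a (vscale t b) = t * dot a b.
Proof. by rewrite /dot /rsum big_distrr; apply: eq_bigr => i _ /=; rewrite /vscale; ring. Qed.

Lemma vadd_vscale0 a b : vadd a (vscale 0 b) = a.
Proof. by apply: functional_extensionality => i; rewrite /vadd /vscale; ring. Qed.

Lemma sum_sq_ge0 y (P : pred 'I_n) : 0 <= \big[Rplus/0]_(i | P i) (y i * y i).
Proof. by apply: (big_ind (fun x => 0 <= x)) => [|x x'|i _]; nra. Qed.

Lemma dot_self_neq0 y : y <> @vzero n -> dot y y <> 0.
Proof.
move=> y_neq0 yy0; apply: y_neq0; apply: functional_extensionality => i.
have : y i * y i <= dot y y.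
  rewrite /dot /rsum (bigD1 i) //=; set rest := \big[_/_]_(_ | _) _.
  have : 0 <= rest by apply: sum_sq_ge0.
  lra.
rewrite yy0 => sq_le0.
have sq0 : y i * y i = 0 by have := Rle_0_sqr (y i); rewrite /Rsqr; lra.
by case: (Rmult_integral _ _ sq0).
Qed.

Lemma norm_sq y : norm y ^ 2 = dot y y.
Proof. by rewrite /norm pow2_sqrt //; apply: sum_sq_ge0. Qed.
End Vectors.

Definition signb (b : bool) : R := if b then -1 else 1.

Lemma pow_neg1 m : (-1) ^ m = signb (odd m).
Proof. elim: m => [|m IH] //=; rewrite IH; case: (odd m) => /=; ring. Qed.

Lemma signbM a b : signb a * signb b = signb (a (+) b).
Proof. by case: a; case: b => /=; ring. Qed.

(** * Left multiplication by vectors in Cl_n *)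

Section CliffordVectors.
Variable n : nat.
Implicit Types (A B C : {set 'I_n}) (i j : 'I_n) (X Y : Cl n).

Definition flip i C : {set 'I_n} := if i \in C then C :\ i else i |: C.

Lemma in_flip i j C : (j \in flip i C) = (j == i) (+) (j \in C).
Proof.
rewrite /flip; case: (boolP (i \in C)) => Ci; rewrite !inE;
  by case: eqP => [->|]; rewrite ?Ci ?(negbTE Ci).
Qed.

Lemma flipK i C : flip i (flip i C) = C.
Proof. by apply/setP => x; rewrite !in_flip; case: (x == i); case: (x \in C). Qed.

Lemma flipC i j C : flip i (flip j C) = flip j (flip i C).
Proof.
by apply/setP => x; rewrite !in_flip; case: (x == i); case: (x == j); case: (x \in C).
Qed.

Lemma flip_eq0 i C : (flip i C == set0) = (C == [set i]).
Proof.
apply/eqP/eqP => [/setP E|->]; apply/setP => x; last by rewrite in_flip !inE; case: (x == i).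
by move: (E x); rewrite in_flip !inE; case: (x == i); case: (x \in C).
Qed.

Lemma setD_set1 i C : ([set i] :\: C) :|: (C :\: [set i]) = flip i C.
Proof. by apply/setP => x; rewrite in_flip !inE; case: (x == i); case: (x \in C). Qed.

Lemma setD_eq_set1 A C j : ((A :\: C) :|: (C :\: A) == [set j]) = (A == flip j C).
Proof.
apply/eqP/eqP => [/setP E|->]; apply/setP => x.
  by move: (E x); rewrite in_flip !inE; case: (x == j); case: (x \in C); case: (x \in A).
by rewrite !inE in_flip; case: (x == j); case: (x \in C).
Qed.

Definition count_set (P : pred 'I_n) B := #|[set b in B | P b]|.

Lemma count_setD1 (P : pred 'I_n) j B :
  j \in B -> count_set P B = (P j + count_set P (B :\ j))%N.
Proof.
move=> Bj; rewrite /count_set (cardsD1 j) !inE Bj /=; congr (_ + _)%N.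
by apply: eq_card => x; rewrite !inE; case: (x == j).
Qed.

Lemma odd_count_flip (P : pred 'I_n) B j :
  odd (count_set P (flip j B)) = P j (+) odd (count_set P B).
Proof.
rewrite /flip; case: (boolP (j \in B)) => Bj.
  by rewrite (count_setD1 P Bj) oddD; case: (P j); case: odd.
rewrite (count_setD1 P (setU11 j B)) oddD setU1K //.
by case: (P j).
Qed.

Lemma clsign_set1l i B :
  clsign [set i] B = signb (odd (count_set (fun b => (b < i)%N) B) (+) (i \in B)).
Proof.
rewrite /clsign pow_neg1 oddD; congr (signb (odd _ (+) _)).
  have pair_inj : injective (pair i : 'I_n -> 'I_n * 'I_n) by move=> b b' [].
  rewrite /count_set -(card_imset _ pair_inj).
  apply: eq_card => -[p q]; rewrite !inE /=.
  apply/andP/imsetP => [[/andP[/eqP -> Bq] qi]|[c]]; first by exists q; rewrite // !inE Bq.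
  by rewrite !inE => /andP[Bc ci] [-> ->]; rewrite eqxx Bc.
case: (boolP (i \in B)) => Bi; first by rewrite (elimT setIidPl) ?sub1set // cards1.
by rewrite disjoint_setI0 ?cards0 // disjoints1.
Qed.

Lemma clsign_set1r A j :
  clsign A [set j] = signb (odd (count_set (fun a => (j < a)%N) A) (+) (j \in A)).
Proof.
rewrite /clsign pow_neg1 oddD; congr (signb (odd _ (+) _)).
  have pair_inj : injective ((pair^~ j) : 'I_n -> 'I_n * 'I_n) by move=> a a' [].
  rewrite /count_set -(card_imset _ pair_inj).
  apply: eq_card => -[p q]; rewrite !inE /=.
  apply/andP/imsetP => [[/andP[Ap /eqP ->] jp]|[c]]; first by exists p; rewrite // !inE Ap.
  by rewrite !inE => /andP[Ac jc] [-> ->]; rewrite eqxx Ac.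
case: (boolP (j \in A)) => Aj; first by rewrite (elimT setIidPr) ?sub1set // cards1.
by rewrite disjoint_setI0 ?cards0 // disjoint_sym disjoints1.
Qed.

Definition lsign i C := clsign [set i] (flip i C).
Definition rsign j C := clsign (flip j C) [set j].

Lemma lsignE i C :
  lsign i C = signb (odd (count_set (fun b => (b < i)%N) C) (+) ~~ (i \in C)).
Proof. by rewrite /lsign clsign_set1l odd_count_flip in_flip eqxx ltnn. Qed.

Lemma rsignE j C :
  rsign j C = signb (odd (count_set (fun a => (j < a)%N) C) (+) ~~ (j \in C)).
Proof. by rewrite /rsign clsign_set1r odd_count_flip in_flip eqxx ltnn. Qed.

(* The Clifford relations e_i e_j + e_j e_i = -2 delta_ij, read on the coefficient of e_C. *)
Lemma lsign_anticomm i j C :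
  lsign i C * lsign j (flip i C) + lsign j C * lsign i (flip j C)
  = if i == j then -2 else 0.
Proof.
rewrite !lsignE !odd_count_flip !in_flip !signbM.
have [->|neq_ij] := eqVneq i j.
  by rewrite ltnn /=; case: odd; case: (j \in C) => /=; ring.
have lt_ji : (j < i)%N = ~~ (i < j)%N.
  by move: neq_ij; rewrite -val_eqE ltn_neqAle leqNgt eq_sym => ->.
rewrite lt_ji /=.
by case: (odd _); case: (odd _); case: (i \in C); case: (j \in C); case: (i < j)%N => /=; ring.
Qed.

Lemma lsign_rsign i j C : lsign i C * rsign j (flip i C) = rsign j C * lsign i (flip j C).
Proof.
rewrite lsignE !rsignE lsignE !odd_count_flip !in_flip !signbM eq_sym.
by case: (odd _); case: (odd _); case: (i \in C); case: (j \in C);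
  case: (i < j)%N; case: (j < i)%N; case: (i == j).
Qed.

Lemma clmul_vecl (a : vec n) X C :
  clmul (tocl a) X C = rsum (fun i => a i * lsign i C * X (flip i C)).
Proof.
rewrite /clmul /tocl /rsum.
under eq_bigr => A _ do rewrite big_distrr big_distrl /=.
rewrite exchange_big; apply: eq_bigr => i _ /=.
rewrite (eq_bigr (fun A => if A == [set i] then clsign A (flip i C) * a i * X (flip i C) else 0)).
  by rewrite -big_mkcond big_pred1_eq /lsign; ring.
by move=> A _; case: eqP => [->|_]; rewrite ?setD_set1; ring.
Qed.

Lemma clmul_vecr X (b : vec n) C :
  clmul X (tocl b) C = rsum (fun j => b j * rsign j C * X (flip j C)).
Proof.
rewrite /clmul /tocl /rsum.
under eq_bigr => A _ do rewrite big_distrr /=.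
rewrite exchange_big; apply: eq_bigr => j _ /=.
rewrite (eq_bigr (fun A => if A == flip j C then clsign A [set j] * X A * b j else 0)).
  by rewrite -big_mkcond big_pred1_eq /rsign; ring.
move=> A _; rewrite setD_eq_set1; case: eqP => [->|_]; last ring.
by have /eqP -> : (flip j C :\: C) :|: (C :\: flip j C) == [set j] by rewrite setD_eq_set1.
Qed.

Lemma clmul_vec_anticomm (a b : vec n) X :
  cladd (clmul (tocl a) (clmul (tocl b) X)) (clmul (tocl b) (clmul (tocl a) X))
  = clscale (-2 * dot a b) X.
Proof.
apply: functional_extensionality => C; rewrite /cladd /clscale !clmul_vecl /rsum.
under eq_bigr => i _ do rewrite clmul_vecl /rsum big_distrr.
under [X in _ + X]eq_bigr => j _ do rewrite clmul_vecl /rsum big_distrr.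
rewrite [X in _ + X]exchange_big -big_split /dot /rsum big_distrr big_distrl /=.
apply: eq_bigr => i _; rewrite -big_split /= -(rsum_delta (fun _ => -2 * (a i * b i) * X C) i).
apply: eq_bigr => j _ /=; rewrite (flipC j i).
transitivity (a i * b j * X (flip i (flip j C))
  * (lsign i C * lsign j (flip i C) + lsign j C * lsign i (flip j C))); first ring.
rewrite lsign_anticomm eq_sym; case: eqP => [->|_]; [rewrite flipK; ring | exact: Rmult_0_r].
Qed.

Lemma clmul_vec_assoc (a : vec n) X (b : vec n) :
  clmul (clmul (tocl a) X) (tocl b) = clmul (tocl a) (clmul X (tocl b)).
Proof.
apply: functional_extensionality => C; rewrite clmul_vecr clmul_vecl /rsum.
under eq_bigr => j _ do rewrite clmul_vecl /rsum big_distrr.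
under [RHS]eq_bigr => i _ do rewrite clmul_vecr /rsum big_distrr.
rewrite exchange_big; apply: eq_bigr => i _; apply: eq_bigr => j _ /=.
rewrite (flipC j i); transitivity (a i * b j * X (flip i (flip j C))
  * (rsign j C * lsign i (flip j C))); first ring.
by rewrite -lsign_rsign; ring.
Qed.

Definition cl1 : Cl n := fun C => if C == set0 then 1 else 0.

Lemma tocl_set1 (a : vec n) i : tocl a [set i] = a i.
Proof.
rewrite /tocl -(rsum_delta a i) /rsum; apply: eq_bigr => j _.
by rewrite (inj_eq set1_inj) eq_sym.
Qed.

Lemma clmul_vec_cl1 (a : vec n) : clmul (tocl a) cl1 = tocl a.
Proof.
apply: functional_extensionality => C; rewrite clmul_vecl /cl1 /tocl.
rewrite /rsum; apply: eq_bigr => i _; rewrite flip_eq0.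
case: eqP => [->|_]; last ring.
rewrite lsignE in_set1 eqxx /count_set (_ : [set b in [set i] | (b < i)%N] = set0) ?cards0 /=.
  ring.
by apply/setP => x; rewrite !inE; case: eqP => [->|]; rewrite ?ltnn.
Qed.

Definition clsum (F : 'I_n -> Cl n) : Cl n := fun C => rsum (fun k => F k C).

Lemma eq_clsum (F G : 'I_n -> Cl n) : (forall k, F k = G k) -> clsum F = clsum G.
Proof. by move=> FG; congr clsum; apply: functional_extensionality. Qed.

Lemma clsum_exchange (F : 'I_n -> 'I_n -> Cl n) :
  clsum (fun j => clsum (fun k => F j k)) = clsum (fun k => clsum (fun j => F j k)).
Proof. by apply: functional_extensionality => C; apply: exchange_big. Qed.

Lemma clsumZ c (F : 'I_n -> Cl n) : clsum (fun k => clscale c (F k)) = clscale c (clsum F).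
Proof. by apply: functional_extensionality => C; rewrite /clsum /clscale /rsum big_distrr. Qed.

Lemma clmul_vecDr (a : vec n) X Y :
  clmul (tocl a) (cladd X Y) = cladd (clmul (tocl a) X) (clmul (tocl a) Y).
Proof.
apply: functional_extensionality => C; rewrite /cladd !clmul_vecl /rsum -big_split.
by apply: eq_bigr => i _ /=; ring.
Qed.

Lemma clmul_vecZr (a : vec n) c X : clmul (tocl a) (clscale c X) = clscale c (clmul (tocl a) X).
Proof.
apply: functional_extensionality => C; rewrite /clscale !clmul_vecl /rsum big_distrr.
by apply: eq_bigr => i _ /=; ring.
Qed.

Lemma clmul_vec_sumr (a : vec n) (F : 'I_n -> Cl n) :
  clmul (tocl a) (clsum F) = clsum (fun k => clmul (tocl a) (F k)).
Proof.
apply: functional_extensionality => C; rewrite /clsum clmul_vecl /rsum.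
under [RHS]eq_bigr => k _ do rewrite clmul_vecl /rsum.
rewrite exchange_big; apply: eq_bigr => i _; rewrite big_distrr.
by apply: eq_bigr => k _ /=; ring.
Qed.

Lemma clmul_vec_lincomb (a : vec n) (c : 'I_n -> R) (F : 'I_n -> Cl n) :
  clmul (tocl a) (clsum (fun k => clscale (c k) (F k)))
  = clsum (fun k => clscale (c k) (clmul (tocl a) (F k))).
Proof. by rewrite clmul_vec_sumr; apply: eq_clsum => k; rewrite clmul_vecZr. Qed.

Lemma clmul_vecDl (a b : vec n) X :
  clmul (tocl (vadd a b)) X = cladd (clmul (tocl a) X) (clmul (tocl b) X).
Proof.
apply: functional_extensionality => C; rewrite /cladd !clmul_vecl /rsum -big_split.
by apply: eq_bigr => i _ /=; rewrite /vadd; ring.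
Qed.

Lemma clmul_vecZl c (a : vec n) X :
  clmul (tocl (vscale c a)) X = clscale c (clmul (tocl a) X).
Proof.
apply: functional_extensionality => C; rewrite /clscale !clmul_vecl /rsum big_distrr.
by apply: eq_bigr => i _ /=; rewrite /vscale; ring.
Qed.

Lemma clmul_unitv j X C : clmul (tocl (unitv j)) X C = lsign j C * X (flip j C).
Proof.
rewrite clmul_vecl -(rsum_delta (fun i => lsign i C * X (flip i C)) j) /rsum.
by apply: eq_bigr => i _; rewrite /unitv; case: eqP => _; ring.
Qed.

Lemma clmul_vec_basis (a : vec n) X :
  clsum (fun j => clscale (a j) (clmul (tocl (unitv j)) X)) = clmul (tocl a) X.
Proof.
apply: functional_extensionality => C; rewrite /clsum /clscale clmul_vecl /rsum.
by apply: eq_bigr => j _; rewrite clmul_unitv; ring.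
Qed.

Lemma clmul_vec_sq (a : vec n) X :
  clmul (tocl a) (clmul (tocl a) X) = clscale (- dot a a) X.
Proof.
apply: functional_extensionality => C.
move: (congr1 (fun Z => Z C) (clmul_vec_anticomm a a X)); rewrite /cladd /clscale /=; lra.
Qed.

Lemma clmul_vec_swap (a b : vec n) X :
  clmul (tocl a) (clmul (tocl b) X)
  = cladd (clscale (-1) (clmul (tocl b) (clmul (tocl a) X))) (clscale (-2 * dot a b) X).
Proof.
apply: functional_extensionality => C.
move: (congr1 (fun Z => Z C) (clmul_vec_anticomm a b X)); rewrite /cladd /clscale /=; lra.
Qed.

Definition reflect (y v : vec n) : vec n := vadd v (vscale (-2 * dot y v / dot y y) y).

Lemma reflect_line (y w v : vec n) t :
  reflect y (vadd w (vscale t v)) = vadd (reflect y w) (vscale t (reflect y v)).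
Proof.
apply: functional_extensionality => i; rewrite /reflect dotDr dotZr /vadd /vscale.
case: (Req_dec (dot y y) 0) => [->|D0]; first by rewrite /Rdiv Rinv_0; ring.
by field.
Qed.

Lemma reflect_unitv_sym (y : vec n) j k : reflect y (unitv j) k = reflect y (unitv k) j.
Proof. by rewrite /reflect /vadd /vscale !dot_unitv /unitv eq_sym /Rdiv; ring. Qed.

Section Reflection.
Variable y : vec n.
Hypothesis yy_neq0 : dot y y <> 0.

Lemma clmul_reflect_vec (v : vec n) X :
  clmul (tocl (reflect y v)) (clmul (tocl y) X) = clscale (-1) (clmul (tocl y) (clmul (tocl v) X)).
Proof.
rewrite clmul_vecDl clmul_vecZl clmul_vec_sq (clmul_vec_swap v y).
by apply: functional_extensionality => C; rewrite /cladd /clscale dotC; field.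
Qed.

Lemma clmul_vec_reflect (w : vec n) X :
  clmul (tocl y) (clmul (tocl (reflect y w)) X) = clscale (-1) (clmul (tocl w) (clmul (tocl y) X)).
Proof.
rewrite clmul_vecDl clmul_vecZl clmul_vecDr clmul_vecZr clmul_vec_sq (clmul_vec_swap y w).
by apply: functional_extensionality => C; rewrite /cladd /clscale; field.
Qed.

Lemma grade1_sandwich (w : vec n) :
  grade1 (clmul (clmul (tocl y) (tocl w)) (tocl y)) = vscale (dot y y) (reflect y w).
Proof.
rewrite clmul_vec_assoc -{2}(clmul_vec_cl1 y) (clmul_vec_swap w y).
rewrite clmul_vecDr !clmul_vecZr clmul_vec_sq !clmul_vec_cl1.
apply: functional_extensionality => i.
rewrite /grade1 /cladd /clscale !tocl_set1 /reflect /vadd /vscale dotC.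
by field.
Qed.
End Reflection.
End CliffordVectors.

(** * Directional derivatives of polynomials *)

Lemma derivable_pt_lim_big_sum (I : Type) (r : seq I) (F : I -> R -> R) (L : I -> R) x :
  (forall i, derivable_pt_lim (F i) x (L i)) ->
  derivable_pt_lim (fun t => \big[Rplus/0]_(i <- r) F i t) x (\big[Rplus/0]_(i <- r) L i).
Proof.
move=> dF; elim: r => [|i r IH].
  by rewrite big_nil; apply: (derivable_pt_lim_ext (fct_cte 0)) => [t|];
    [rewrite big_nil | exact: derivable_pt_lim_const].
rewrite big_cons; apply: (derivable_pt_lim_ext (F i + fun t => \big[Rplus/0]_(j <- r) F j t)%F).
  by move=> t; rewrite big_cons.
exact: derivable_pt_lim_plus.
Qed.

Section Gradients.
Variable n : nat.

Definition has_gradient (h : vec n -> R) (u g : vec n) : Prop :=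
  forall v, derivable_pt_lim (fun t => h (vadd u (vscale t v))) 0 (dot v g).

Definition gateaux_differentiable (h : vec n -> R) (u : vec n) : Prop :=
  exists g, has_gradient h u g.

Lemma has_gradient_const c u : has_gradient (fun=> c) u (@vzero n).
Proof.
move=> v; rewrite (_ : dot v (@vzero n) = 0); first exact: derivable_pt_lim_const.
by rewrite /dot /rsum big1 // => i _; rewrite /vzero; ring.
Qed.

Lemma has_gradient_pow_coord i m u :
  has_gradient (fun x => x i ^ m) u (vscale (INR m * u i ^ m.-1) (unitv i)).
Proof.
move=> v; rewrite dotZr dot_unitv.
have dline : derivable_pt_lim (fun t => u i + t * v i) 0 (v i).
  have := derivable_pt_lim_plus _ _ 0 _ _ (derivable_pt_lim_const (u i) 0)
            (derivable_pt_lim_scal id (v i) 0 _ (derivable_pt_lim_id 0)).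
  rewrite Rplus_0_l Rmult_1_r; apply: derivable_pt_lim_ext => t.
  by rewrite /plus_fct /fct_cte /mult_real_fct /id; ring.
have := derivable_pt_lim_comp _ (pow^~ m) 0 _ _ dline (derivable_pt_lim_pow (u i + 0 * v i) m).
by rewrite Rmult_0_l Rplus_0_r Rmult_comm.
Qed.

Lemma has_gradient_add h1 h2 u g1 g2 :
  has_gradient h1 u g1 -> has_gradient h2 u g2 ->
  has_gradient (fun x => h1 x + h2 x) u (vadd g1 g2).
Proof. by move=> d1 d2 v; rewrite dotDr; exact: derivable_pt_lim_plus. Qed.

Lemma has_gradient_mul h1 h2 u g1 g2 :
  has_gradient h1 u g1 -> has_gradient h2 u g2 ->
  has_gradient (fun x => h1 x * h2 x) u (vadd (vscale (h2 u) g1) (vscale (h1 u) g2)).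
Proof.
move=> d1 d2 v; have := derivable_pt_lim_mult _ _ _ _ _ (d1 v) (d2 v).
by rewrite dotDr !dotZr /mult_fct vadd_vscale0; congr derivable_pt_lim; ring.
Qed.

Lemma gateaux_differentiable_ext h1 h2 u :
  (forall x, h1 x = h2 x) -> gateaux_differentiable h1 u -> gateaux_differentiable h2 u.
Proof.
move=> h12 [g dh1]; exists g => v.
by apply: (derivable_pt_lim_ext _ _ _ _ _ (dh1 v)) => t; rewrite h12.
Qed.

Lemma gateaux_differentiable_const c u : gateaux_differentiable (fun=> c) u.
Proof. by exists (@vzero n); apply: has_gradient_const. Qed.

Lemma gateaux_differentiable_add h1 h2 u :
  gateaux_differentiable h1 u -> gateaux_differentiable h2 u ->
  gateaux_differentiable (fun x => h1 x + h2 x) u.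
Proof. by move=> [g1 d1] [g2 d2]; eexists; apply: has_gradient_add d1 d2. Qed.

Lemma gateaux_differentiable_mul h1 h2 u :
  gateaux_differentiable h1 u -> gateaux_differentiable h2 u ->
  gateaux_differentiable (fun x => h1 x * h2 x) u.
Proof. by move=> [g1 d1] [g2 d2]; eexists; apply: has_gradient_mul d1 d2. Qed.

Lemma gateaux_differentiable_big_sum (I : Type) (r : seq I) (F : I -> vec n -> R) u :
  (forall i, gateaux_differentiable (F i) u) ->
  gateaux_differentiable (fun x => \big[Rplus/0]_(i <- r) F i x) u.
Proof.
move=> dF; elim: r => [|i r IH].
  apply: (gateaux_differentiable_ext _ (gateaux_differentiable_const 0 u)) => x.
  by rewrite big_nil.
apply: (gateaux_differentiable_ext _ (gateaux_differentiable_add (dF i) IH)) => x.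
by rewrite big_cons.
Qed.

Lemma gateaux_differentiable_big_prod (I : Type) (r : seq I) (F : I -> vec n -> R) u :
  (forall i, gateaux_differentiable (F i) u) ->
  gateaux_differentiable (fun x => \big[Rmult/1]_(i <- r) F i x) u.
Proof.
move=> dF; elim: r => [|i r IH].
  apply: (gateaux_differentiable_ext _ (gateaux_differentiable_const 1 u)) => x.
  by rewrite big_nil.
apply: (gateaux_differentiable_ext _ (gateaux_differentiable_mul (dF i) IH)) => x.
by rewrite big_cons.
Qed.

Lemma gateaux_differentiable_hom_poly k (g : vec n -> Cl n) A u :
  homogeneous_poly k g -> gateaux_differentiable (fun x => g x A) u.
Proof.
move=> [s [_ g_eq]]; apply: (gateaux_differentiable_ext (fun x => esym (g_eq x A))).
apply: gateaux_differentiable_big_sum => m.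
apply: gateaux_differentiable_mul; first exact: gateaux_differentiable_const.
apply: gateaux_differentiable_big_prod => i.
by eexists; apply: has_gradient_pow_coord.
Qed.

Lemma rpartial_eq (h : vec n -> R) j u l :
  derivable_pt_lim (fun t => h (vadd u (vscale t (unitv j)))) 0 l -> rpartial h j u = l.
Proof.
move=> dh; apply: (uniqueness_limite _ 0 _ _ _ dh).
by apply: epsilon_spec; exists l.
Qed.

Lemma has_gradient_rpartial (h : vec n -> R) u :
  gateaux_differentiable h u -> has_gradient h u (fun k => rpartial h k u).
Proof.
move=> [g dh]; have -> : (fun k => rpartial h k u) = g.
  by apply: functional_extensionality => k; rewrite (rpartial_eq (dh (unitv k))) dotC dot_unitv.
exact: dh.
Qed.

End Gradients.

(** * The Dirac operator after a reflection *)

Section DiracReflection.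
Variable n : nat.

Lemma derivable_pt_lim_clmul_vec (a : vec n) (X : R -> Cl n) (X' : Cl n) C :
  (forall B, derivable_pt_lim (fun t => X t B) 0 (X' B)) ->
  derivable_pt_lim (fun t => clmul (tocl a) (X t) C) 0 (clmul (tocl a) X' C).
Proof.
move=> dX; rewrite clmul_vecl.
apply: (derivable_pt_lim_ext (fun t => rsum (fun i => a i * lsign i C * X t (flip i C)))).
  by move=> t; rewrite clmul_vecl.
by apply: derivable_pt_lim_big_sum => i; apply: derivable_pt_lim_scal.
Qed.

Lemma clpartial_linear_comp (H : vec n -> Cl n) (psi : vec n -> vec n) s0 (y : vec n) j w :
  (forall B, gateaux_differentiable (fun u => H u B) (psi w)) ->
  (forall t, psi (vadd w (vscale t (unitv j))) = vadd (psi w) (vscale t (psi (unitv j)))) ->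
  clpartial (fun x => clscale s0 (clmul (tocl y) (H (psi x)))) j w
  = clscale s0
      (clmul (tocl y) (clsum (fun k => clscale (psi (unitv j) k) (clpartial H k (psi w))))).
Proof.
move=> dH psi_lin; apply: functional_extensionality => C; apply: rpartial_eq.
apply: derivable_pt_lim_scal; apply: derivable_pt_lim_clmul_vec => B.
apply: (derivable_pt_lim_ext _ _ _ _ _ (has_gradient_rpartial (dH B) (psi (unitv j)))).
by move=> t; rewrite psi_lin.
Qed.

Lemma dirac_clsum (g : vec n -> Cl n) u :
  dirac g u = clsum (fun j => clmul (tocl (unitv j)) (clpartial g j u)).
Proof. by []. Qed.

Lemma dirac_reflect_comp (H : vec n -> Cl n) s0 (y w : vec n) :
  dot y y <> 0 ->
  (forall B, gateaux_differentiable (fun u => H u B) (reflect y w)) ->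
  dirac (fun x => clscale s0 (clmul (tocl y) (H (reflect y x)))) w
  = clscale (- s0) (clmul (tocl y) (dirac H (reflect y w))).
Proof.
move=> yy_neq0 dH; rewrite !dirac_clsum.
under eq_clsum => j do rewrite (clpartial_linear_comp _ _ dH (reflect_line y w (unitv j)))
  clmul_vecZr !clmul_vec_lincomb.
rewrite clsumZ clsum_exchange.
under eq_clsum => k do under eq_clsum => j do rewrite reflect_unitv_sym.
under eq_clsum => k do rewrite clmul_vec_basis clmul_reflect_vec //.
rewrite clsumZ -clmul_vec_sumr.
by apply: functional_extensionality => C; rewrite /clscale; ring.
Qed.

Lemma Pk_reflect_comp k (H : vec n -> Cl n) s0 (y w : vec n) :
  dot y y <> 0 ->
  (forall B, gateaux_differentiable (fun u => H u B) (reflect y w)) ->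
  Pk k (fun x => clscale s0 (clmul (tocl y) (H (reflect y x)))) w
  = clscale s0 (clmul (tocl y) (Pk k H (reflect y w))).
Proof.
move=> yy_neq0 dH; rewrite /Pk /= dirac_reflect_comp //.
rewrite clmul_vecDr !clmul_vecZr clmul_vec_reflect //.
by apply: functional_extensionality => C; rewrite /cladd /clscale; ring.
Qed.
End DiracReflection.

Theorem lemma2 (n k : nat) (U : vec n -> Prop) (f : vec n -> vec n -> Cl n) :
  (1 <= k)%N ->
  domain U ->
  (forall x, U x -> harmonic_hom_poly k (f x)) ->
  forall (y w : vec n), y <> @vzero n -> U (vinv y) ->
    Pk k (fun w' : vec n =>
            clscale (/ (norm y ^ n))
              (clmul (tocl y)
                 (f (vinv y)
                    (grade1 (clscale (/ (norm y ^ 2))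
                       (clmul (clmul (tocl y) (tocl w')) (tocl y))))))) w
    = clscale (/ (norm y ^ n))
        (clmul (tocl y)
           (Pk k (f (vinv y))
              (grade1 (clscale (/ (norm y ^ 2))
                 (clmul (clmul (tocl y) (tocl w)) (tocl y)))))).
Proof.
move=> _ _ f_harm y w y_neq0 Uy.
have yy_neq0 := dot_self_neq0 y_neq0.
have sandwich_reflect v :
    grade1 (clscale (/ (norm y ^ 2)) (clmul (clmul (tocl y) (tocl v)) (tocl y))) = reflect y v.
  apply: functional_extensionality => i.
  have /(congr1 (fun u => u i)) := grade1_sandwich yy_neq0 v.
  by rewrite /grade1 /clscale /vscale norm_sq => ->; field.
under [X in Pk k X w]functional_extensionality => v do rewrite sandwich_reflect.
rewrite sandwich_reflect Pk_reflect_comp // => B.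
by have [hom _] := f_harm _ Uy; exact: gateaux_differentiable_hom_poly hom.
Qed.
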